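(* Let $(A,\cdot)$ be a finite-dimensional associative algebra and $r\in A\otimes A$ antisymmetric satisfying $r_{12}r_{13}+r_{13}r_{23}-r_{23}r_{12}=0$. Let $D_r$ be the vector space $A\oplus A^*$ with the product $x*y=x\cdot y$, $a^**b^*=R^*(r(a^* ))b^*+L^*(r(b^* ))a^*$, $x*a^*=x\cdot r(a^* )-r(R^*(x)a^* )+R^*(x)a^*$, $a^**x=r(a^* )\cdot x-r(L^*(x)a^* )+L^*(x)a^*$ ($x,y\in A$, $a^*,b^*\in A^*$), and let $A\ltimes_{R^*,L^*}A^*$ be $A\oplus A^*$ with product $(x+a^* )(y+b^* )=x\cdot y+R^*(x)b^*+L^*(y)a^*$. Let $\mathcal B(x+a^*,y+b^* )=\langle x,b^*\rangle+\langle a^*,y\rangle$. Then $D_r$ and $A\ltimes_{R^*,L^*}A^*$ are associative algebras, $\mathcal B$ is invariant on both, and there is an isomorphism of associative algebras $\varphi:A\ltimes_{R^*,L^*}A^*\to D_r$ with $\mathcal B(\varphi(u),\varphi(v))=\mathcal B(u,v)$ for all $u,v$ (i.e. they are isomorphic as Frobenius algebras).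
   Context: $L(x)y=x\cdot y$, $R(x)y=y\cdot x$; $\langle L^*(x)a^*,y\rangle=\langle a^*,x\cdot y\rangle$, $\langle R^*(x)a^*,y\rangle=\langle a^*,y\cdot x\rangle$. Antisymmetric means $\sigma(r)=-r$ with $\sigma(x\otimes y)=y\otimes x$. For $r=\sum_i x_i\otimes y_i$: $r_{12}r_{13}=\sum_{i,j}x_i\cdot x_j\otimes y_i\otimes y_j$, $r_{13}r_{23}=\sum_{i,j}x_i\otimes x_j\otimes y_i\cdot y_j$, $r_{23}r_{12}=\sum_{i,j}x_j\otimes x_i\cdot y_j\otimes y_i$. $r$ is regarded as a map $A^*\to A$ by $\langle u^*\otimes v^*,r\rangle=\langle u^*,r(v^* )\rangle$. A bilinear form $\mathcal B$ on an associative algebra is invariant if $\mathcal B(uv,w)=\mathcal B(u,vw)$. *)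

From HB Require Import structures.
From mathcomp Require Import all_boot all_order all_algebra.
Set Implicit Arguments. Unset Strict Implicit. Unset Printing Implicit Defensive.
Import GRing.Theory.
Local Open Scope ring_scope.

(* A finite-dimensional algebra A over a field K is modelled as K^n = 'rV[K]_n
   with a product [mul] (bilinearity and associativity are hypotheses of the
   theorem).  The dual space A^dual is identified with 'rV[K]_n through the
   standard pairing [pair], i.e. via the dual basis of the standard basis. *)

Section Defs.
Variables (K : fieldType) (n : nat).
Local Notation V := 'rV[K]_n.

Definition ebas (i : 'I_n) : V := delta_mx 0 i.

Definition pair (a x : V) : K := \sum_(i < n) a 0 i * x 0 i.

Variable mul : V -> V -> V.

Definition is_bilinear : Prop :=
  (forall (c : K) (x y z : V), mul (c *: x + y) z = c *: mul x z + mul y z) /\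
  (forall (c : K) (x y z : V), mul z (c *: x + y) = c *: mul z x + mul z y).

Definition is_assoc : Prop := forall x y z : V, mul (mul x y) z = mul x (mul y z).

(* <L^dual(x) a^dual, y> = <a^dual, x.y>  and  <R^dual(x) a^dual, y> = <a^dual, y.x> *)
Definition Lst (x a : V) : V := \row_(j < n) pair a (mul x (ebas j)).
Definition Rst (x a : V) : V := \row_(j < n) pair a (mul (ebas j) x).

(* r = \sum_{i,j} r i j e_i (x) e_j is a matrix; antisymmetry sigma(r) = -r *)
Definition antisym (r : 'M[K]_n) : Prop := trmx r = - r.

(* r as a map A^dual -> A:  <u^dual (x) v^dual, r> = <u^dual, r(v^dual)> *)
Definition rmap (r : 'M[K]_n) (v : V) : V := \row_(i < n) \sum_(j < n) r i j * v 0 j.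

(* Coordinates (p,q,s) of r12 r13, r13 r23, r23 r12 in A (x) A (x) A,
   for r = \sum_{i,j} r i j e_i (x) e_j. *)
Definition r12r13 (r : 'M[K]_n) (p q s : 'I_n) : K :=
  \sum_(i < n) \sum_(k < n) r i q * r k s * (mul (ebas i) (ebas k)) 0 p.
Definition r13r23 (r : 'M[K]_n) (p q s : 'I_n) : K :=
  \sum_(j < n) \sum_(l < n) r p j * r q l * (mul (ebas j) (ebas l)) 0 s.
Definition r23r12 (r : 'M[K]_n) (p q s : 'I_n) : K :=
  \sum_(i < n) \sum_(l < n) r i s * r p l * (mul (ebas i) (ebas l)) 0 q.

Definition AYBE (r : 'M[K]_n) : Prop :=
  forall p q s : 'I_n, r12r13 r p q s + r13r23 r p q s - r23r12 r p q s = 0.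

Definition DS := (V * V)%type.

Definition dsadd (u v : DS) : DS := (u.1 + v.1, u.2 + v.2).
Definition dsscale (c : K) (u : DS) : DS := (c *: u.1, c *: u.2).

Definition semidirect_mul (u v : DS) : DS :=
  (mul u.1 v.1, Rst u.1 v.2 + Lst v.1 u.2).

(* product of D_r, extended bilinearly from the four given formulas *)
Definition Dr_mul (r : 'M[K]_n) (u v : DS) : DS :=
  let x := u.1 in let a := u.2 in let y := v.1 in let b := v.2 in
  (mul x y
     + (mul x (rmap r b) - rmap r (Rst x b))
     + (mul (rmap r a) y - rmap r (Lst y a)),
   Rst x b + Lst y a + (Rst (rmap r a) b + Lst (rmap r b) a)).

Definition Bform (u v : DS) : K := pair v.2 u.1 + pair u.2 v.1.

Definition ds_assoc (m : DS -> DS -> DS) : Prop :=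
  forall u v w, m (m u v) w = m u (m v w).

Definition ds_invariant (m : DS -> DS -> DS) : Prop :=
  forall u v w, Bform (m u v) w = Bform u (m v w).

End Defs.

From HB Require Import structures.
From mathcomp Require Import all_boot all_order all_algebra ring.
Set Implicit Arguments. Unset Strict Implicit. Unset Printing Implicit Defensive.
Import GRing.Theory.
Local Open Scope ring_scope.

(* The whole theorem rests on the linear bijection
       phi (x, a) = (x - r(a), a)        with inverse    (x, a) |-> (x + r(a), a).
   (1) The semidirect product A |x_{R*,L*} A* is associative and B is invariant
       on it; both are direct consequences of the associativity of A, through
       the defining identities <L*(x)a, y> = <a, xy> and <R*(x)a, y> = <a, yx>.
   (2) Antisymmetry of r gives <b, r(a)> = -<a, r(b)>, so phi preserves B.
   (3) The AYBE, together with antisymmetry, implies the identity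
           r(a) r(b) = r(R*(r(a)) b + L*(r(b)) a);
       both sides are bilinear in (a, b), so it suffices to check it on basis
       vectors, where it is literally r12r13 = r23r12 - r13r23.
   (4) Using (3), phi turns the semidirect product into the product of D_r.
   (5) A bijection intertwining two products transports associativity, and if
       it preserves B it also transports invariance; this gives the claims on
       D_r and the Frobenius isomorphism. *)

Section Pairing.
Variables (K : fieldType) (n : nat).
Local Notation V := 'rV[K]_n.
Local Notation e := (ebas K).

Lemma ebas_expand (u : V) : u = \sum_(j < n) u 0 j *: e j.
Proof. exact: row_sum_delta. Qed.

Lemma pairE (a x : V) : pair a x = (a *m x^T) 0 0.
Proof. by rewrite mxE; apply: eq_bigr => i _; rewrite mxE. Qed.

Lemma pairDl (a b x : V) : pair (a + b) x = pair a x + pair b x.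
Proof. by rewrite !pairE mulmxDl mxE. Qed.

Lemma pairZl (c : K) (a x : V) : pair (c *: a) x = c * pair a x.
Proof. by rewrite !pairE -scalemxAl mxE. Qed.

Lemma pairDr (a x y : V) : pair a (x + y) = pair a x + pair a y.
Proof. by rewrite !pairE linearD mulmxDr mxE. Qed.

Lemma pairZr (c : K) (a x : V) : pair a (c *: x) = c * pair a x.
Proof. by rewrite !pairE linearZ -scalemxAr mxE. Qed.

Lemma pairNr (a x : V) : pair a (- x) = - pair a x.
Proof. by rewrite -scaleN1r pairZr mulN1r. Qed.

Lemma pair_sumr (a : V) (F : 'I_n -> V) :
  pair a (\sum_(j < n) F j) = \sum_(j < n) pair a (F j).
Proof.
have pair0r : pair a 0 = 0 by have := pairZr 0 a 0; rewrite scale0r mul0r.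
exact: (big_morph (pair a) (pairDr a) pair0r).
Qed.

Lemma pair_ebasr (a : V) (j : 'I_n) : pair a (e j) = a 0 j.
Proof.
rewrite /pair (bigD1 j) //= big1 => [|i /negPf ne_ij].
  by rewrite mxE !eqxx mulr1 addr0.
by rewrite mxE ne_ij andbF mulr0.
Qed.

Lemma pair_ebasl (x : V) (j : 'I_n) : pair (e j) x = x 0 j.
Proof.
by rewrite /pair -pair_ebasr; apply: eq_bigr => i _; rewrite mulrC.
Qed.

Lemma pair_ext (u v : V) : (forall w, pair u w = pair v w) -> u = v.
Proof. by move=> eq_uv; apply/rowP => j; rewrite -!pair_ebasr eq_uv. Qed.

End Pairing.

Section Bilinear.
Variables (K : fieldType) (n : nat) (F : 'rV[K]_n -> 'rV[K]_n -> 'rV[K]_n).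
Hypothesis F_bilinear : is_bilinear F.
Local Notation e := (ebas K).

Lemma bilinDl x y z : F (x + y) z = F x z + F y z.
Proof. by have := proj1 F_bilinear 1 x y z; rewrite !scale1r. Qed.

Lemma bilinDr x y z : F z (x + y) = F z x + F z y.
Proof. by have := proj2 F_bilinear 1 x y z; rewrite !scale1r. Qed.

Lemma bilin0l z : F 0 z = 0.
Proof. by apply: (addrI (F 0 z)); rewrite -bilinDl !addr0. Qed.

Lemma bilin0r z : F z 0 = 0.
Proof. by apply: (addrI (F z 0)); rewrite -bilinDr !addr0. Qed.

Lemma bilinZl c x z : F (c *: x) z = c *: F x z.
Proof. by have := proj1 F_bilinear c x 0 z; rewrite !addr0 bilin0l addr0. Qed.

Lemma bilinZr c x z : F z (c *: x) = c *: F z x.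
Proof. by have := proj2 F_bilinear c x 0 z; rewrite !addr0 bilin0r addr0. Qed.

Lemma bilinBl x y z : F (x - y) z = F x z - F y z.
Proof. by rewrite bilinDl -scaleN1r bilinZl scaleN1r. Qed.

Lemma bilinBr x y z : F z (x - y) = F z x - F z y.
Proof. by rewrite bilinDr -scaleN1r bilinZr scaleN1r. Qed.

Lemma bilin_expandl x z : F x z = \sum_(j < n) x 0 j *: F (e j) z.
Proof.
rewrite {1}(ebas_expand x) (big_morph (F^~ z) (fun x y => bilinDl x y z) (bilin0l z)).
by apply: eq_bigr => j _; rewrite bilinZl.
Qed.

Lemma bilin_expandr z y : F z y = \sum_(k < n) y 0 k *: F z (e k).
Proof.
rewrite {1}(ebas_expand y) (big_morph (F z) (fun x y => bilinDr x y z) (bilin0r z)).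
by apply: eq_bigr => k _; rewrite bilinZr.
Qed.

Lemma bilin_expand x y :
  F x y = \sum_(j < n) \sum_(k < n) (x 0 j * y 0 k) *: F (e j) (e k).
Proof.
rewrite bilin_expandl; apply: eq_bigr => j _.
by rewrite bilin_expandr scaler_sumr; apply: eq_bigr => k _; rewrite scalerA.
Qed.

End Bilinear.

Lemma bilin_ext (K : fieldType) (n : nat) (F G : 'rV[K]_n -> 'rV[K]_n -> 'rV[K]_n) :
  is_bilinear F -> is_bilinear G ->
  (forall j k, F (ebas K j) (ebas K k) = G (ebas K j) (ebas K k)) ->
  forall x y, F x y = G x y.
Proof.
move=> F_bilinear G_bilinear FG_basis x y.
rewrite (bilin_expand F_bilinear) (bilin_expand G_bilinear).
by apply: eq_bigr => j _; apply: eq_bigr => k _; rewrite FG_basis.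
Qed.

Section RMatrix.
Variables (K : fieldType) (n : nat) (r : 'M[K]_n).
Local Notation e := (ebas K).

Lemma rmap_mulmx (v : 'rV[K]_n) : rmap r v = v *m r^T.
Proof. by apply/rowP => i; rewrite !mxE; apply: eq_bigr => j _; rewrite !mxE mulrC. Qed.

Lemma rmap_linear : linear (rmap r).
Proof. by move=> c u v; rewrite !rmap_mulmx mulmxDl scalemxAl. Qed.

Lemma rmap_ebasE (i j : 'I_n) : rmap r (e j) 0 i = r i j.
Proof. by rewrite rmap_mulmx /ebas -rowE !mxE. Qed.

Hypothesis r_antisym : antisym r.

Lemma antisymE (i j : 'I_n) : r i j = - r j i.
Proof. by have := congr1 (fun M : 'M_n => M j i) r_antisym; rewrite !mxE. Qed.

Lemma pair_rmap_anti (a b : 'rV[K]_n) : pair b (rmap r a) = - pair a (rmap r b).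
Proof.
have scalar_tr (M : 'M[K]_1) : M 0 0 = M^T 0 0 by rewrite mxE.
rewrite !rmap_mulmx !pairE scalar_tr !trmx_mul !trmxK r_antisym.
by rewrite mulmxN mulNmx mulmxA mxE.
Qed.

End RMatrix.

Section Coregular.
Variables (K : fieldType) (n : nat) (mul : 'rV[K]_n -> 'rV[K]_n -> 'rV[K]_n).
Hypothesis mul_bilinear : is_bilinear mul.

Lemma pair_Lst x a w : pair (Lst mul x a) w = pair a (mul x w).
Proof.
rewrite (bilin_expandr mul_bilinear x w) pair_sumr [LHS]/pair.
by apply: eq_bigr => j _; rewrite mxE pairZr mulrC.
Qed.

Lemma pair_Rst x a w : pair (Rst mul x a) w = pair a (mul w x).
Proof.
rewrite (bilin_expandl mul_bilinear w x) pair_sumr [LHS]/pair.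
by apply: eq_bigr => j _; rewrite mxE pairZr mulrC.
Qed.

Lemma Lst_bilinear : is_bilinear (Lst mul).
Proof.
split=> c x y z; apply: pair_ext => w;
  by rewrite pairDl pairZl !pair_Lst ?(proj1 mul_bilinear) ?pairDl ?pairZl
             ?pairDr ?pairZr.
Qed.

Lemma Rst_bilinear : is_bilinear (Rst mul).
Proof.
split=> c x y z; apply: pair_ext => w;
  by rewrite pairDl pairZl !pair_Rst ?(proj2 mul_bilinear) ?pairDl ?pairZl
             ?pairDr ?pairZr.
Qed.

Hypothesis mul_assoc : is_assoc mul.

(* Both claims reduce, after pairing with a test vector, to associativity of A. *)
Lemma semidirect_assoc : ds_assoc (semidirect_mul mul).
Proof.
move=> [x a] [y b] [z c]; rewrite /semidirect_mul /=.
congr (_, _); first exact: mul_assoc.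
apply: pair_ext => w.
by rewrite !(pairDl, pair_Rst, pair_Lst) !mul_assoc addrA.
Qed.

Lemma semidirect_invariant : ds_invariant (semidirect_mul mul).
Proof.
move=> [x a] [y b] [z c]; rewrite /Bform /semidirect_mul /=.
by rewrite !(pairDl, pair_Rst, pair_Lst) addrA.
Qed.

End Coregular.

Section YangBaxter.
Variables (K : fieldType) (n : nat) (mul : 'rV[K]_n -> 'rV[K]_n -> 'rV[K]_n).
Variable r : 'M[K]_n.
Hypotheses (mul_bilinear : is_bilinear mul) (r_antisym : antisym r).
Hypothesis r_aybe : AYBE mul r.
Local Notation e := (ebas K).

Lemma r12r13_basis j l p :
  mul (rmap r (e j)) (rmap r (e l)) 0 p = r12r13 mul r p j l.
Proof.
rewrite (bilin_expand mul_bilinear) summxE; apply: eq_bigr => i _.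
by rewrite summxE; apply: eq_bigr => k _; rewrite mxE !rmap_ebasE.
Qed.

Lemma r13r23_basis j l p :
  \sum_(q < n) r p q * Rst mul (rmap r (e j)) (e l) 0 q = - r13r23 mul r p j l.
Proof.
rewrite /r13r23 -sumrN; apply: eq_bigr => q _.
rewrite mxE pair_ebasl (bilin_expandr mul_bilinear) summxE mulr_sumr -sumrN.
apply: eq_bigr => k _.
by rewrite mxE rmap_ebasE (antisymE r_antisym k j) mulNr mulrN mulrA.
Qed.

Lemma r23r12_basis j l p :
  \sum_(q < n) r p q * Lst mul (rmap r (e l)) (e j) 0 q = r23r12 mul r p j l.
Proof.
rewrite /r23r12 exchange_big; apply: eq_bigr => q _.
rewrite mxE pair_ebasl (bilin_expandl mul_bilinear) summxE mulr_sumr.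
by apply: eq_bigr => i _; rewrite mxE rmap_ebasE mulrA [r p q * _]mulrC.
Qed.

Lemma rmap_mul_basis j l :
  mul (rmap r (e j)) (rmap r (e l)) =
  rmap r (Rst mul (rmap r (e j)) (e l) + Lst mul (rmap r (e l)) (e j)).
Proof.
apply/rowP => p; rewrite r12r13_basis [RHS]mxE.
under eq_bigr => q _ do rewrite mxE mulrDr.
rewrite big_split /= r13r23_basis r23r12_basis.
by rewrite -[LHS]subr0 -(r_aybe p j l); ring.
Qed.

Lemma rmap_mul a b :
  mul (rmap r a) (rmap r b) = rmap r (Rst mul (rmap r a) b + Lst mul (rmap r b) a).
Proof.
have [Rst_linl Rst_linr] := Rst_bilinear mul_bilinear.
have [Lst_linl Lst_linr] := Lst_bilinear mul_bilinear.
move: a b; apply: bilin_ext; last exact: rmap_mul_basis.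
- by split=> c x y z; rewrite rmap_linear ?(proj1 mul_bilinear) ?(proj2 mul_bilinear).
- split=> c x y z; rewrite rmap_linear ?Rst_linl ?Lst_linr ?Rst_linr ?Lst_linl.
  all: by rewrite -rmap_linear scalerDr addrACA.
Qed.

End YangBaxter.

Section Transport.
Variables (K : fieldType) (n : nat).
Variables (m m' : DS K n -> DS K n -> DS K n) (f g : DS K n -> DS K n).
Hypotheses (fK : cancel f g) (gK : cancel g f).
Hypothesis f_hom : forall u v, f (m u v) = m' (f u) (f v).

Lemma transported_mul u v : m' u v = f (m (g u) (g v)).
Proof. by rewrite f_hom !gK. Qed.

Lemma transport_assoc : ds_assoc m -> ds_assoc m'.
Proof. by move=> m_assoc u v w; rewrite !transported_mul !fK m_assoc. Qed.

Lemma transport_invariant :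
  (forall u v, Bform (f u) (f v) = Bform u v) ->
  ds_invariant m -> ds_invariant m'.
Proof.
move=> f_isometry m_inv u v w.
by rewrite -[u]gK -[v]gK -[w]gK -!f_hom !f_isometry m_inv.
Qed.

End Transport.

Section Isomorphism.
Variables (K : fieldType) (n : nat) (mul : 'rV[K]_n -> 'rV[K]_n -> 'rV[K]_n).
Variable r : 'M[K]_n.

Definition phi (u : DS K n) : DS K n := (u.1 - rmap r u.2, u.2).
Definition phi_inv (u : DS K n) : DS K n := (u.1 + rmap r u.2, u.2).

Lemma phiK : cancel phi phi_inv.
Proof. by move=> [x a]; rewrite /phi /phi_inv /= subrK. Qed.

Lemma phi_invK : cancel phi_inv phi.
Proof. by move=> [x a]; rewrite /phi /phi_inv /= addrK. Qed.

Lemma phi_linear c u v : phi (dsadd (dsscale c u) v) = dsadd (dsscale c (phi u)) (phi v).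
Proof.
case: u v => [x a] [y b]; rewrite /phi /dsadd /dsscale /=.
by rewrite rmap_linear scalerBr opprD addrACA.
Qed.

Hypothesis r_antisym : antisym r.

Lemma phi_isometry u v : Bform (phi u) (phi v) = Bform u v.
Proof.
case: u v => [x a] [y b]; rewrite /phi /Bform /= !pairDr !pairNr.
by rewrite (pair_rmap_anti r_antisym a b) opprK addrACA subrr addr0.
Qed.

Hypotheses (mul_bilinear : is_bilinear mul) (r_aybe : AYBE mul r).

Lemma phi_hom u v : phi (semidirect_mul mul u v) = Dr_mul mul r (phi u) (phi v).
Proof.
case: u v => [x a] [y b]; rewrite /phi /semidirect_mul /Dr_mul /=.
rewrite !(bilinBl mul_bilinear, bilinBr mul_bilinear).
rewrite (bilinBl (Rst_bilinear mul_bilinear)) (bilinBl (Lst_bilinear mul_bilinear)).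
rewrite (rmap_mul mul_bilinear r_antisym r_aybe) !rmap_mulmx !(mulmxDl, mulNmx).
by congr (_, _); apply/rowP => i; rewrite !mxE; ring.
Qed.

End Isomorphism.

Theorem theorem2p4p9 (K : fieldType) (n : nat)
    (mul : 'rV[K]_n -> 'rV[K]_n -> 'rV[K]_n) (r : 'M[K]_n) :
  is_bilinear mul -> is_assoc mul ->
  antisym r -> AYBE mul r ->
  ds_assoc (Dr_mul mul r) /\
  ds_assoc (semidirect_mul mul) /\
  ds_invariant (Dr_mul mul r) /\
  ds_invariant (semidirect_mul mul) /\
  exists phi : DS K n -> DS K n,
    [/\ forall (c : K) (u v : DS K n),
          phi (dsadd (dsscale c u) v) = dsadd (dsscale c (phi u)) (phi v),
        bijective phi,
        forall u v : DS K n,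
          phi (semidirect_mul mul u v) = Dr_mul mul r (phi u) (phi v)
      & forall u v : DS K n, Bform (phi u) (phi v) = Bform u v].
Proof.
move=> mul_bilinear mul_assoc r_antisym r_aybe.
have hom := phi_hom r_antisym mul_bilinear r_aybe.
have sd_assoc := semidirect_assoc mul_bilinear mul_assoc.
have sd_inv := semidirect_invariant mul_bilinear.
have isometry := phi_isometry r_antisym.
split; first exact: transport_assoc (@phiK _ _ r) (@phi_invK _ _ r) hom sd_assoc.
split; first exact: sd_assoc.
split; first exact: transport_invariant (@phi_invK _ _ r) hom isometry sd_inv.
split; first exact: sd_inv.
exists (phi r); split=> //; first exact: phi_linear.
exact: Bijective (@phiK _ _ r) (@phi_invK _ _ r).
Qed.
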